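(* Let $a,b\in\mathbb{Q}_3$ with $\gamma(a)=1$, $\gamma(b)=0$, and let $x=\sum_{k\ge0}x_k3^k\in\mathbb{Z}_3^*$ be such that $A_0=x_0^2+a_0\not\equiv0\pmod3$. Then $x$ is a solution of $x^3+ax=b$ if and only if the congruences $$x_0^3\equiv b_0\pmod3,$$ $$x_0a_0+M_1(x_0)\equiv b_1\pmod3,$$ $$(x_0^2+a_0)x_{k-1}+x_{k-2}a_1+\dots+x_0a_{k-1}+N'_k(x_0,\dots,x_{k-2})+M_k(x_0,\dots,x_{k-2})\equiv b_k\pmod3,\quad k\ge2,$$ are fulfilled, where $M_1(x_0)=\frac{x_0^3-b_0}{3}$ and the integers $M_k(x_0,\dots,x_{k-2})$, $k\ge2$, are defined by $$x_0a_0+M_1(x_0)=b_1+3M_2(x_0),$$ $$(x_0^2+a_0)x_{k-1}+N'_k(x_0,\dots,x_{k-2})+x_{k-2}a_1+\dots+x_0a_{k-1}+M_k(x_0,\dots,x_{k-2})=b_k+3M_{k+1}(x_0,\dots,x_{k-1}),\quad k\ge2.$$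
   Context: Write $a=3^{\gamma(a)}(a_0+a_13+a_23^2+\dots)$, $b=3^{\gamma(b)}(b_0+b_13+b_23^2+\dots)$ in canonical form, with digits $a_j,b_j\in\{0,1,2\}$, $a_0,b_0\ne0$, $\gamma(a),\gamma(b)\in\mathbb{Z}$. $\mathbb{Z}_3^*$ is the set of $3$-adic units; $x\in\mathbb{Z}_3^*$ is written $x=x_0+x_13+x_23^2+\dots$ with $x_j\in\{0,1,2\}$, $x_0\ne0$. For $k\ge1$, $N_k(x_0,\dots,x_{k-1})=\sum \frac{3!}{m_0!\cdots m_{k-1}!}x_0^{m_0}\cdots x_{k-1}^{m_{k-1}}$, the sum over nonnegative integers $m_0,\dots,m_{k-1}$ with $\sum_{i=0}^{k-1}m_i=3$ and $\sum_{i=1}^{k-1}im_i=k$ (so $N_1=0$). Define, for $s$ a positive integer, $$N'_j=\begin{cases}\frac{N_{j-1}}{3}, & j=3s-1,\\ \frac{N_{j-1}}{3}+x_{j/3}^3, & j=3s,\\ \frac{N_{j-1}-x_{(j-1)/3}^3}{3}, & j=3s+1.\end{cases}$$ *)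

From HB Require Import structures.
From mathcomp Require Import all_boot all_order all_algebra.
Set Implicit Arguments. Unset Strict Implicit. Unset Printing Implicit Defensive.
Import Order.TTheory GRing.Theory Num.Theory.

(* 3-adic integers are represented by their digit sequences d : nat -> nat,
   with d k < 3; the represented element is sum_k d k * 3^k.  *)
Definition is_digits3 (d : nat -> nat) : Prop := forall k, d k < 3.

(* truncation: sum_{i<n} d_i 3^i, the image of the 3-adic number in Z/3^n *)
Definition trunc3 (d : nat -> nat) (n : nat) : nat := \sum_(i < n) d i * 3 ^ i.

(* Z_3 = projective limit of Z/3^n Z: with a = 3 * (sum ad_j 3^j),
   b = sum bd_j 3^j, x = sum xd_j 3^j, the equality x^3 + a x = b in Q_3
   holds iff it holds modulo 3^n for every n. *)
Definition solves_cubic3 (ad bd xd : nat -> nat) : Prop :=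
  forall n : nat,
    (trunc3 xd n) ^ 3 + 3 * trunc3 ad n * trunc3 xd n = trunc3 bd n %[mod 3 ^ n].

(* N_k(x_0,...,x_{k-1}) = sum over (m_0..m_{k-1}) with sum m_i = 3 and
   sum i m_i = k of 3!/(m_0!...m_{k-1}!) x_0^{m_0}...x_{k-1}^{m_{k-1}}.
   (each m_i <= 3, so m ranges over functions 'I_k -> 'I_4) *)
Definition Nk (x : nat -> nat) (k : nat) : nat :=
  \sum_(m : {ffun 'I_k -> 'I_4} |
          ((\sum_(i < k) (m i : nat)) == 3) && ((\sum_(i < k) i * m i) == k))
     (3`! %/ \prod_(i < k) (m i)`!) * \prod_(i < k) x i ^ (m i).

Definition Nprime (x : nat -> nat) (j : nat) : nat :=
  if j %% 3 == 2 then Nk x j.-1 %/ 3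
  else if j %% 3 == 0 then Nk x j.-1 %/ 3 + x (j %/ 3) ^ 3
  else (Nk x j.-1 - x (j.-1 %/ 3) ^ 3) %/ 3.

Definition lhs3 (x a : nat -> nat) (k : nat) (m : int) : int :=
  if k == 0 then Posz (x 0 ^ 3)%N
  else if k == 1 then (Posz (x 0 * a 0)%N + m)%R
  else (Posz ((x 0 ^ 2 + a 0) * x k.-1 + Nprime x k
         + \sum_(1 <= i < k) x (k.-1 - i) * a i)%N + m)%R.

(* carries: M_0 := 0 (unused), M_1 = (x_0^3 - b_0)/3,
   M_{k+1} = (lhs_k - b_k)/3  (exact division whenever the previous
   congruences hold; floor division otherwise) *)
Fixpoint Mcarry (x a b : nat -> nat) (k : nat) : int :=
  match k with
  | 0 => 0%R
  | k'.+1 => ((lhs3 x a k' (Mcarry x a b k') - Posz (b k')) %/ 3)%Z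
  end.

From HB Require Import structures.
From mathcomp Require Import all_boot all_order all_algebra.
From mathcomp Require Import zify ring.
Set Implicit Arguments. Unset Strict Implicit. Unset Printing Implicit Defensive.
Import Order.TTheory GRing.Theory Num.Theory.

(* Put P_x = sum_(i<n) x_i X^i in N[X], so that trunc3 x n = P_x(3) and the
   truncated cubic is R(3) with R = P_x^3 + X P_a P_x.  By the multinomial
   formula the coefficient of X^k in P_x^3 is N_k + 3 x_0^2 x_k for k > 0, and
   N_k = x_(k/3)^3 mod 3, since only the cube of a single monomial escapes the
   factor 3.  Carrying the multiples of 3 of each coefficient of R into the
   next one gives R(3) = sum_(k<n) t_k 3^k mod 3^n, where t_k is the k-th
   left-hand side of the theorem without its carry M_k.  A base-3 carry
   argument then shows that these sums agree with trunc3 b n modulo 3^n for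
   every n iff t_k + M_k = b_k mod 3 for every k. *)

Section FfunRcons.
Variables (T : finType) (k : nat).

Definition ffun_rcons (g : {ffun 'I_k -> T}) (a : T) : {ffun 'I_k.+1 -> T} :=
  [ffun i => if unlift ord_max i is Some j then g j else a].

Lemma ffun_rcons_widen g a (i : 'I_k) :
  ffun_rcons g a (widen_ord (leqnSn k) i) = g i.
Proof.
have -> : widen_ord (leqnSn k) i = lift ord_max i.
  by apply/val_inj; rewrite [RHS]lift_max.
by rewrite ffunE liftK.
Qed.

Lemma ffun_rcons_last g a : ffun_rcons g a ord_max = a.
Proof. by rewrite ffunE unlift_none. Qed.

Lemma big_ord_ffun_rcons (R : Type) (idx : R) (op : Monoid.law idx)
    (F : nat -> T -> R) g a :
  \big[op/idx]_(i < k.+1) F i (ffun_rcons g a i) =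
  op (\big[op/idx]_(i < k) F i (g i)) (F k a).
Proof.
rewrite big_ord_recr /= ffun_rcons_last; congr (op _ _).
by apply: eq_bigr => i _; rewrite ffun_rcons_widen.
Qed.

Lemma big_ffun_rcons (R : Type) (idx : R) (op : Monoid.com_law idx)
    (F : {ffun 'I_k.+1 -> T} -> R) :
  \big[op/idx]_f F f =
  \big[op/idx]_(g : {ffun 'I_k -> T}) \big[op/idx]_(a : T) F (ffun_rcons g a).
Proof.
rewrite pair_bigA /= (reindex (fun p => ffun_rcons p.1 p.2)) //=.
exists (fun f => ([ffun j => f (lift ord_max j)], f ord_max)).
- move=> [g a] _ /=; congr (_, _); last exact: ffun_rcons_last.
  by apply/ffunP => j; rewrite !ffunE liftK.
- move=> f _; apply/ffunP => i; rewrite ffunE.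
  by case: unliftP => [j ->|->]; rewrite ?ffunE.
Qed.

End FfunRcons.

Lemma dvdn_prod_fact_sum k (f : 'I_k -> nat) :
  \prod_(i < k) (f i)`! %| (\sum_(i < k) f i)`!.
Proof.
elim: k f => [|k IH] f; first by rewrite !big_ord0.
rewrite !big_ord_recr /=; set A := \sum_(i < k) _.
rewrite -(bin_fact (leq_addl A (f ord_max))) addnK mulnCA [X in X %| _]mulnC.
by apply: dvdn_mul => //; apply/dvdn_mull/(IH (fun i => f (widen_ord _ i))).
Qed.

(* Exponents range over 'I_4 as in [Nk], so this is the coefficient of X^w in
   (sum_(i<k) x_i X^i)^s only for s <= 3. *)
Definition multinom (x : nat -> nat) (k s w : nat) : nat :=
  \sum_(m : {ffun 'I_k -> 'I_4} |
          ((\sum_(i < k) (m i : nat)) == s) && ((\sum_(i < k) i * m i) == w))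
     (s`! %/ \prod_(i < k) (m i)`!) * \prod_(i < k) x i ^ (m i).

Lemma multinom0 x s w : multinom x 0 s w = ((s == 0) && (w == 0)).
Proof.
rewrite /multinom; under eq_bigl do rewrite !big_ord0.
under eq_bigr do rewrite !big_ord0.
rewrite divn1 muln1 eq_sym [0 == w]eq_sym.
case: ((s == 0) && (w == 0)) / andP => [[/eqP -> _]|_]; last by rewrite big_pred0.
by rewrite sum_nat_const card_ffun !card_ord.
Qed.

Lemma multinomS x k s w : s <= 3 ->
  multinom x k.+1 s w = \sum_(a < 4) (if (a <= s) && (k * a <= w)
      then 'C(s, a) * x k ^ a * multinom x k (s - a) (w - k * a) else 0).
Proof.
move=> s_le3; rewrite /multinom big_mkcond /=.
rewrite (big_ffun_rcons addn) exchange_big /=; apply: eq_bigr => a _.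
under eq_bigr => g _ do rewrite
  (big_ord_ffun_rcons addn (fun _ (v : 'I_4) => nat_of_ord v))
  (big_ord_ffun_rcons addn (fun i (v : 'I_4) => i * v))
  (big_ord_ffun_rcons muln (fun _ (v : 'I_4) => v`!))
  (big_ord_ffun_rcons muln (fun i (v : 'I_4) => x i ^ v)).
case: ifP => [/andP[a_le_s ka_le_w]|a_out]; last first.
  apply: big1 => g _; case: ifP => // /andP[/eqP s_eq /eqP w_eq].
  by rewrite -s_eq -w_eq !leq_addl in a_out.
rewrite [RHS]big_distrr [RHS]big_mkcond /=; apply: eq_bigr => g _.
set S1 := \sum_(i < k) (g i : nat); set S2 := \sum_(i < k) i * g i.
have -> : (S1 + a == s) = (S1 == s - a) by apply/eqP/eqP; lia.
have -> : (S2 + k * a == w) = (S2 == w - k * a) by apply/eqP/eqP; lia.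
case: ifP => // /andP[/eqP S1_eq _].
have /dvdnP[q fact_eq] := dvdn_prod_fact_sum (fun i => nat_of_ord (g i)).
rewrite -/S1 S1_eq in fact_eq.
set P := \prod_(i < k) (g i)`!.
have P_gt0 : 0 < P by apply: prodn_gt0 => i; rewrite fact_gt0.
rewrite fact_eq mulnK // -(bin_fact a_le_s) fact_eq.
rewrite (_ : 'C(s, a) * (a`! * (q * P)) = ('C(s, a) * q) * (P * a`!)); last by ring.
rewrite mulnK ?muln_gt0 ?P_gt0 ?fact_gt0 //; ring.
Qed.

Local Open Scope ring_scope.

Definition digits_poly (d : nat -> nat) (n : nat) : {poly nat} := \poly_(i < n) d i.

Lemma digits_polyS d n : digits_poly d n.+1 = digits_poly d n + d n *: 'X^n.
Proof. by rewrite /digits_poly !poly_def big_ord_recr. Qed.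

Lemma coef_digits_poly d n i : (digits_poly d n)`_i = if (i < n)%N then d i else 0.
Proof. exact: coef_poly. Qed.

Lemma horner_digits_poly d n : (digits_poly d n).[3] = trunc3 d n.
Proof. by rewrite horner_poly. Qed.

Lemma coef_digits_poly_exp x k s w : (s <= 3)%N ->
  (digits_poly x k ^+ s)`_w = multinom x k s w.
Proof.
elim: k s w => [|k IH] s w s_le3.
  rewrite /digits_poly poly_def big_ord0 expr0n multinom0 coefMn coef1.
  by case: (s == 0%N); case: w.
rewrite digits_polyS exprDn coef_sum multinomS //.
rewrite (big_ord_widen 4 (fun i =>
  ((digits_poly x k ^+ (s - i) * (x k *: 'X^k) ^+ i) *+ 'C(s, i))`_w)) //.
rewrite big_mkcond /=; apply: eq_bigr => a _.
rewrite ltnS exprZn -exprM -scalerAr coefMn coefZ coefMXn.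
case: (leqP a s) => //= a_le_s.
case: (leqP (k * a) w) => /= [ka_le_w|_]; last by rewrite mulr0 mul0rn.
rewrite IH; last by lia.
by rewrite -mulr_natr natn natrXE !natrME; ring.
Qed.

Lemma Nk_coef x k : Nk x k = (digits_poly x k ^+ 3)`_k.
Proof. by rewrite coef_digits_poly_exp. Qed.

Lemma expr3_add (R : comPzSemiRingType) (p q : R) :
  (p + q) ^+ 3 = p ^+ 3 + (q * (p ^+ 2 + p * q)) *+ 3 + q ^+ 3.
Proof. ring. Qed.

Section CubeAddMonomial.
Variables (p : {poly nat}) (c k : nat).

Lemma coef_scaleXnM (r : {poly nat}) i :
  (c *: 'X^k * r)`_i = if (i < k)%N then 0 else c * r`_(i - k).
Proof. by rewrite -scalerAl coefZ coefXnM; case: ifP; rewrite ?mulr0. Qed.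

Lemma coef_scaleXn_cube i : ((c *: 'X^k) ^+ 3)`_i = if i == (k * 3)%N then (c ^ 3)%N else 0.
Proof. by rewrite exprZn -exprM coefZ coefXn natrXE; case: eqP; rewrite ?mulr1 ?mulr0. Qed.

Lemma coef_cube_addXn_lt i : (i < k)%N ->
  ((p + c *: 'X^k) ^+ 3)`_i = (p ^+ 3)`_i.
Proof.
move=> i_lt_k; rewrite expr3_add coefD coefD coefMn coef_scaleXnM coef_scaleXn_cube i_lt_k.
by rewrite ifF ?mul0rn ?addr0 //; apply/eqP; lia.
Qed.

Lemma coef_cube_addXn_diag : (0 < k)%N ->
  ((p + c *: 'X^k) ^+ 3)`_k = (p ^+ 3)`_k + 3 * c * p`_0 ^+ 2.
Proof.
move=> k_gt0; rewrite expr3_add coefD coefD coefMn coef_scaleXnM coef_scaleXn_cube.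
rewrite ltnn subnn coefD expr2 !coef0M coefZ coefXn eq_sym (gtn_eqF k_gt0).
rewrite ifF; last by apply/eqP; lia.
by rewrite mulr0 !addr0 -mulr_natr natn; ring.
Qed.

Lemma coef_cube_addXn_mod3 i : exists r,
  ((p + c *: 'X^k) ^+ 3)`_i =
  (p ^+ 3)`_i + (3 * r)%N + (if i == (k * 3)%N then (c ^ 3)%N else 0).
Proof.
rewrite expr3_add coefD coefD coefMn coef_scaleXnM coef_scaleXn_cube.
exists (if (i < k)%N then 0 else c * (p ^+ 2 + p * (c *: 'X^k))`_(i - k)).
by rewrite -mulr_natr natn; case: ifP => _; ring.
Qed.

End CubeAddMonomial.

Lemma coef_digits_cube_stable x n i : (i < n)%N ->
  (digits_poly x n ^+ 3)`_i = (digits_poly x i.+1 ^+ 3)`_i.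
Proof.
elim: n => // n IH; rewrite ltnS leq_eqVlt => /orP[/eqP -> //|i_lt_n].
by rewrite digits_polyS coef_cube_addXn_lt // IH.
Qed.

Lemma coef_digits_cube_diag x i : (0 < i)%N ->
  (digits_poly x i.+1 ^+ 3)`_i = (Nk x i + 3 * x 0 ^ 2 * x i)%N.
Proof.
move=> i_gt0; rewrite digits_polyS coef_cube_addXn_diag // -Nk_coef.
by rewrite coef_digits_poly i_gt0; ring.
Qed.

Lemma coef_digits_cube0 x : (digits_poly x 1 ^+ 3)`_0 = (x 0 ^ 3)%N.
Proof.
rewrite digits_polyS /digits_poly poly_def big_ord0 add0r expr0 exprZn expr1n coefZ coef1.
by rewrite mulr1.
Qed.

Lemma coef_digits_cube_mod3 x n w : exists q,
  (digits_poly x n ^+ 3)`_w =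
  (3 * q + if (3 %| w) && (w %/ 3 < n) then x (w %/ 3) ^ 3 else 0)%N.
Proof.
elim: n => [|n [q IH]].
  by exists 0%N; rewrite /digits_poly poly_def big_ord0 expr0n coef0 andbF.
rewrite digits_polyS; have [r ->] := coef_cube_addXn_mod3 (digits_poly x n) (x n) n w.
exists (q + r)%N; rewrite IH.
have [->|w_ne] := eqVneq w (n * 3)%N.
  by rewrite mulnK // dvdn_mull // ltnn ltnSn /=; ring.
have -> : ((3 %| w) && (w %/ 3 < n.+1))%N = ((3 %| w) && (w %/ 3 < n))%N.
  by apply/idP/idP => /andP[w3 lt_w]; apply/andP; split => //; lia.
by rewrite addr0; ring.
Qed.

Local Close Scope ring_scope.

Definition Nk_residue (x : nat -> nat) (n : nat) : nat :=
  if 3 %| n then x (n %/ 3) ^ 3 else 0.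

Definition Nk_quo (x : nat -> nat) (n : nat) : nat := (Nk x n - Nk_residue x n) %/ 3.

Lemma Nk_decomp x n : 0 < n -> Nk x n = 3 * Nk_quo x n + Nk_residue x n.
Proof.
move=> n_gt0; have [q] := coef_digits_cube_mod3 x n n.
rewrite -Nk_coef (_ : n %/ 3 < n) ?andbT; last by lia.
by rewrite -/(Nk_residue x n) /Nk_quo => ->; rewrite addnK mulKn.
Qed.

Lemma Nprime_decomp x n : 1 < n -> Nprime x n = Nk_quo x n.-1 + Nk_residue x n.
Proof.
move=> n_gt1; rewrite /Nprime /Nk_quo /Nk_residue /dvdn.
have : n %% 3 < 3 by rewrite ltn_mod.
case n_mod: (n %% 3) => [|[|[|?]]] // _.
- by rewrite ifF ?subn0 //; apply/negbTE/eqP; lia.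
- by rewrite ifT ?addn0 //; apply/eqP; lia.
- by rewrite ifF ?subn0 ?addn0 //; apply/negbTE/eqP; lia.
Qed.

Definition cubic_coef (x a : nat -> nat) (i : nat) : nat :=
  if i == 0 then x 0 ^ 3
  else Nk x i + 3 * x 0 ^ 2 * x i + \sum_(j < i) a j * x (i.-1 - j).

Local Open Scope ring_scope.

Lemma horner_coef_split (R : comNzSemiRingType) (p : {poly R}) (c : R) n :
  exists e, p.[c] = \sum_(i < n) p`_i * c ^+ i + c ^+ n * e.
Proof.
exists (\sum_(i < size p) p`_(n + i) * c ^+ i).
rewrite (horner_coef_wide _ (leq_addl n (size p))) big_split_ord /=.
congr (_ + _); rewrite big_distrr /=; apply: eq_bigr => i _.
by rewrite exprD; ring.
Qed.

Lemma telescope_carries (R : comPzSemiRingType) (p : R) (c t e : nat -> R) n :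
  (forall i, (i < n)%N -> c i + e i = t i + p * e i.+1) ->
  \sum_(i < n) c i * p ^+ i + e 0%N = \sum_(i < n) t i * p ^+ i + p ^+ n * e n.
Proof.
elim: n => [|n IH] carry; first by rewrite !big_ord0 expr0 mul1r.
rewrite !big_ord_recr /= -addrA [_ * _ + e 0%N]addrC addrA.
rewrite IH => [|i lt_in]; last exact/carry/ltnW.
rewrite -addrA [c n * _]mulrC -mulrDr [e n + _]addrC carry //.
by rewrite exprSr; ring.
Qed.

Definition cubic_poly (x a : nat -> nat) (n : nat) : {poly nat} :=
  digits_poly x n ^+ 3 + 'X * digits_poly a n * digits_poly x n.

Lemma horner_cubic_poly x a n :
  (cubic_poly x a n).[3] = (trunc3 x n ^ 3 + 3 * trunc3 a n * trunc3 x n)%N.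
Proof.
by rewrite /cubic_poly hornerD !hornerM hornerX !horner_digits_poly.
Qed.

Lemma coef_cubic_poly x a n i : (i < n)%N -> (cubic_poly x a n)`_i = cubic_coef x a i.
Proof.
move=> i_lt_n; rewrite coefD coef_digits_cube_stable // -mulrA coefXM /cubic_coef.
case: i i_lt_n => [|i] i_lt_n /=; first by rewrite coef_digits_cube0 addr0.
rewrite coef_digits_cube_diag // coefM; congr (_ + _); apply: eq_bigr => j _.
have j_lt_n : (j < n)%N by have := ltn_ord j; lia.
have ij_lt_n : (i - j < n)%N by lia.
by rewrite !coef_digits_poly j_lt_n ij_lt_n.
Qed.

Local Close Scope ring_scope.

Definition digit_term (x a : nat -> nat) (k : nat) : nat :=
  if k == 0 then x 0 ^ 3 else if k == 1 then x 0 * a 0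
  else (x 0 ^ 2 + a 0) * x k.-1 + Nprime x k + \sum_(1 <= i < k) x (k.-1 - i) * a i.

Definition Nk_carry (x : nat -> nat) (i : nat) : nat :=
  if i == 0 then 0 else x 0 ^ 2 * x i + Nk_quo x i.

Lemma cubic_coef_carry x a i :
  cubic_coef x a i + Nk_carry x i.-1 = digit_term x a i + 3 * Nk_carry x i.
Proof.
rewrite /cubic_coef /digit_term /Nk_carry; case: i => [|[|i]] /=.
- by ring.
- by rewrite big_ord1 Nk_decomp //= /Nk_residue /=; ring.
rewrite Nprime_decomp // Nk_decomp // big_ord_recl big_add1 big_mkord /=.
rewrite /Nk_residue (eq_bigr (fun j : 'I_i.+1 => x (i.+1 - j.+1) * a j.+1)) => [|j _].
  by rewrite subn0; ring.
by rewrite mulnC.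
Qed.

Lemma cubic_trunc_digit_terms x a n : exists e,
  (trunc3 x n ^ 3 + 3 * trunc3 a n * trunc3 x n)%N =
  (\sum_(k < n) digit_term x a k * 3 ^+ k + 3 ^+ n * e)%R.
Proof.
have [e] := horner_coef_split (cubic_poly x a n) 3 n.
rewrite horner_cubic_poly (eq_bigr (fun i : 'I_n => cubic_coef x a i * 3 ^+ i)%R);
  last by move=> i _; rewrite coef_cubic_poly.
have := telescope_carries (c := cubic_coef x a) (t := digit_term x a)
  (e := fun i => Nk_carry x i.-1) (p := 3) (n := n) (fun i _ => cubic_coef_carry x a i).
rewrite /= [Nk_carry x 0]/= addr0 => -> ->.
by exists (Nk_carry x n.-1 + e); rewrite mulrDr addrA.
Qed.

Local Open Scope ring_scope.

Section BaseCarries.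
Variables (p : int) (t b M : nat -> int).
Hypothesis M0 : M 0%N = 0.
Hypothesis MS : forall k, M k.+1 = ((t k + M k - b k) %/ p)%Z.

Lemma carry_sum n :
  (forall k, (k < n)%N -> (t k + M k = b k %[mod p])%Z) ->
  \sum_(k < n) t k * p ^+ k = \sum_(k < n) b k * p ^+ k + p ^+ n * M n.
Proof.
move=> digits; have := telescope_carries (c := t) (t := b) (e := M) (p := p) (n := n).
rewrite M0 addr0; apply=> k /digits /eqP; rewrite eqz_mod_dvd MS => /divzK carry.
by rewrite mulrC carry [RHS]addrC subrK.
Qed.

Lemma congr_sums_iff_digits : p != 0 ->
  (forall n, (\sum_(k < n) t k * p ^+ k = \sum_(k < n) b k * p ^+ k %[mod p ^+ n])%Z) <->
  (forall k, (t k + M k = b k %[mod p])%Z).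
Proof.
move=> p_neq0; split=> [sums k | digits n]; last first.
  by rewrite (carry_sum (fun k _ => digits k)) mulrC addrC modzMDl.
elim/ltn_ind: k => k IH; apply/eqP; rewrite eqz_mod_dvd.
move/eqP: (sums k.+1); rewrite !big_ord_recr /= (carry_sum IH) eqz_mod_dvd.
rewrite (_ : _ - _ = p ^+ k * (t k + M k - b k)); last by ring.
by rewrite exprSr dvdz_mul2l // expf_neq0.
Qed.

End BaseCarries.

Lemma eqn_mod_int (m n d : nat) : m = n %[mod d] <-> (m%:Z = n%:Z %[mod d%:Z])%Z.
Proof. by rewrite !modz_nat; split=> [-> | []]. Qed.

Lemma lhs3_digit_term x a b k :
  lhs3 x a k (Mcarry x a b k) = (digit_term x a k)%:Z + Mcarry x a b k.
Proof. by case: k => [|[|k]]; rewrite /lhs3 /digit_term /= ?addr0. Qed.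

Lemma trunc3_int d n : (trunc3 d n)%:Z = \sum_(k < n) (d k)%:Z * 3 ^+ k.
Proof.
rewrite -natz /trunc3 natr_sum; apply: eq_bigr => k _.
by rewrite natrM natrX !natz.
Qed.

Lemma solves_cubic3_digit_terms a b x : solves_cubic3 a b x <->
  forall n, (\sum_(k < n) (digit_term x a k)%:Z * 3 ^+ k =
             \sum_(k < n) (b k)%:Z * 3 ^+ k %[mod 3 ^+ n])%Z.
Proof.
suff per_n n : (trunc3 x n ^ 3 + 3 * trunc3 a n * trunc3 x n = trunc3 b n %[mod 3 ^ n])%N
  <-> (\sum_(k < n) (digit_term x a k)%:Z * 3 ^+ k =
       \sum_(k < n) (b k)%:Z * 3 ^+ k %[mod 3 ^+ n])%Z.
  by split=> sol n; apply/per_n.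
have [e ->] := cubic_trunc_digit_terms x a n.
rewrite eqn_mod_int trunc3_int -!natz rmorphD rmorphM rmorph_sum rmorphXn natrX /=.
under eq_bigr do rewrite rmorphM rmorphXn /= !natz.
by rewrite !natz addrC mulrC modzMDl.
Qed.

Local Close Scope ring_scope.

Theorem theorem3p7 (ad bd xd : nat -> nat) :
  is_digits3 ad -> ad 0 != 0 ->
  is_digits3 bd -> bd 0 != 0 ->
  is_digits3 xd -> xd 0 != 0 ->
  ~~ (3 %| xd 0 ^ 2 + ad 0) ->
  solves_cubic3 ad bd xd <->
  (forall k : nat,
     (lhs3 xd ad k (Mcarry xd ad bd k) = Posz (bd k) %[mod 3])%Z).
Proof.
move=> *; rewrite solves_cubic3_digit_terms.
rewrite (congr_sums_iff_digits (p := 3) (t := fun k => Posz (digit_term xd ad k))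
  (b := fun k => Posz (bd k)) (M := Mcarry xd ad bd)) //.
- by split=> digits k; [rewrite lhs3_digit_term | rewrite -lhs3_digit_term]; apply: digits.
- by move=> k; rewrite /= lhs3_digit_term.
Qed.
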